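(* Let $\mathbf x_\alpha$ and $\mathbf y_\beta$ be distinct variables, $\mathbf A_\alpha$ and $\mathbf B_\gamma$ expressions, and suppose that either (1) $\mathbf A_\alpha$ is eval-free and $\mathbf y_\beta$ is not free in $\mathbf A_\alpha$, or (2) $\mathbf B_\gamma$ is eval-free and $\mathbf x_\alpha$ is not free in $\mathbf B_\gamma$. Then $(\lambda\mathbf x_\alpha.\lambda\mathbf y_\beta.\mathbf B_\gamma)\,\mathbf A_\alpha=\lambda\mathbf y_\beta.((\lambda\mathbf x_\alpha.\mathbf B_\gamma)\,\mathbf A_\alpha)$ is valid in CTT$_{\rm qe}$.
   Context: The logic CTT$_{\rm qe}$. Types: $\iota$ (individuals), $o$ (truth values), $\epsilon$ (constructions), and $(\alpha\to\beta)$ for types $\alpha,\beta$. Let $\mathcal V$ be a set of typed symbols (variables) containing denumerably many symbols $\mathbf{x}_\alpha$ of each type $\alpha$, and $\mathcal C$ a disjoint set of typed symbols (constants) containing the logical constants $=_{\alpha\to\alpha\to o}$ (each $\alpha$), $\mathsf{is\text{-}var}_{\epsilon\to o}$, $\mathsf{is\text{-}var}^\alpha_{\epsilon\to o}$, $\mathsf{is\text{-}con}_{\epsilon\to o}$, $\mathsf{is\text{-}con}^\alpha_{\epsilon\to o}$, $\mathsf{app}_{\epsilon\to\epsilon\to\epsilon}$, $\mathsf{abs}_{\epsilon\to\epsilon\to\epsilon}$, $\mathsf{quo}_{\epsilon\to\epsilon}$, $\mathsf{is\text{-}expr}_{\epsilon\to o}$, $\mathsf{is\text{-}expr}^\alpha_{\epsilon\to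 o}$ (each $\alpha$), $\sqsubset_{\epsilon\to\epsilon\to o}$, $\mathsf{is\text{-}free\text{-}in}_{\epsilon\to\epsilon\to o}$. Expressions $\mathbf{A}_\alpha$ (subscript = type) are defined inductively: (1) a variable $\mathbf{x}_\alpha$; (2) a constant $\mathbf{c}_\alpha$; (3) application $(\mathbf{F}_{\alpha\to\beta}\,\mathbf{A}_\alpha)$ of type $\beta$; (4) abstraction $(\lambda\mathbf{x}_\alpha.\mathbf{B}_\beta)$ of type $\alpha\to\beta$; (5) quotation $\ulcorner\mathbf{A}_\alpha\urcorner$ of type $\epsilon$, formed only if $\mathbf{A}_\alpha$ is eval-free; (6) evaluation $[\![\mathbf{A}_\epsilon]\!]_{\mathbf{B}_\beta}$ of type $\beta$, written $[\![\mathbf{A}_\epsilon]\!]_\beta$ (the second component only fixes the type). An expression is eval-free if built using rules (1)–(5) only. A formula is an expression of type $o$. In an eval-free expression, an occurrence of a variable $\mathbf{x}_\alpha$ is free if it is not inside a quotation and not inside a subexpression of the form $\lambda\mathbf{x}_\alpha.\mathbf{C}$; $\mathbf{x}_\alpha$ is free in $\mathbf{B}$ if it has a free occurrence there. Constructions: the smallest set of expressions of type $\epsilon$ containing all $\ulcorner\mathbf{x}_\alpha\urcorner$ and $\ulcorner\mathbf{c}_\alpha\urcorner$ and closed under forming $\mathsf{app}\,\mathbf{A}_\epsilon\,\mathbf{B}_\epsilon$, $\mathsf{abs}\,\mathbf{A}_\epsilon\,\mathbf{B}_\epsilon$, $\mathsf{quo}\,\mathbf{A}_\epsilon$. The injective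 map $\mathcal E$ from eval-free expressions to constructions: $\mathcal E(\mathbf{x}_\alpha)=\ulcorner\mathbf{x}_\alpha\urcorner$, $\mathcal E(\mathbf{c}_\alpha)=\ulcorner\mathbf{c}_\alpha\urcorner$, $\mathcal E(\mathbf{F}\,\mathbf{A})=\mathsf{app}\,\mathcal E(\mathbf F)\,\mathcal E(\mathbf A)$, $\mathcal E(\lambda\mathbf{x}_\alpha.\mathbf B)=\mathsf{abs}\,\mathcal E(\mathbf x_\alpha)\,\mathcal E(\mathbf B)$, $\mathcal E(\ulcorner\mathbf A\urcorner)=\mathsf{quo}\,\mathcal E(\mathbf A)$. Abbreviations: $\mathbf A_\alpha=\mathbf B_\alpha$ is $=_{\alpha\to\alpha\to o}\mathbf A_\alpha\mathbf B_\alpha$; $T_o$ is $(=_{o\to o\to o}\,=\,=_{o\to o\to o})$; $F_o$ is $(\lambda x_o.T_o)=(\lambda x_o.x_o)$; $\forall\mathbf x_\alpha.\mathbf A_o$ is $(\lambda\mathbf x_\alpha.T_o)=(\lambda\mathbf x_\alpha.\mathbf A_o)$; $\neg\mathbf A_o$ is $=_{o\to o\to o}F_o\,\mathbf A_o$; $\exists\mathbf x_\alpha.\mathbf A_o$ is $\neg\forall\mathbf x_\alpha.\neg\mathbf A_o$; $\mathbf A\neq\mathbf B$ is $\neg(\mathbf A=\mathbf B)$; $\mathsf{IS\text{-}EFFECTIVE\text{-}IN}(\mathbf x_\alpha,\mathbf B_\beta)$ is $\exists\mathbf y_\alpha.((\lambda\mathbf x_\alpha.\mathbf B_\beta)\,\mathbf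 y_\alpha\neq\mathbf B_\beta)$ for a variable $\mathbf y_\alpha$ distinct from $\mathbf x_\alpha$. Semantics. A frame is $\{D_\alpha\}$ with $D_\iota$ nonempty, $D_o=\{\mathrm T,\mathrm F\}$, $D_\epsilon$ the set of all constructions, and $D_{\alpha\to\beta}$ some set of total functions $D_\alpha\to D_\beta$. An interpretation $(\{D_\alpha\},I)$ has $I(\mathbf c_\alpha)\in D_\alpha$ for each constant, with: $I(=_{\alpha\to\alpha\to o})$ the (curried) identity relation on $D_\alpha$; $I(\mathsf{is\text{-}var})(A)=\mathrm T$ iff $A=\ulcorner\mathbf x_\beta\urcorner$ for some variable of some type; $I(\mathsf{is\text{-}var}^\alpha)(A)=\mathrm T$ iff $A=\ulcorner\mathbf x_\alpha\urcorner$ for some variable of type $\alpha$; likewise $\mathsf{is\text{-}con}$, $\mathsf{is\text{-}con}^\alpha$ with constants; $I(\mathsf{app})(A)(B)$, $I(\mathsf{abs})(A)(B)$, $I(\mathsf{quo})(A)$ are the constructions $\mathsf{app}\,A\,B$, $\mathsf{abs}\,A\,B$, $\mathsf{quo}\,A$; $I(\mathsf{is\text{-}expr})(A)=\mathrm T$ iff $A=\mathcal E(\mathbf B_\beta)$ for some eval-free $\mathbf B_\beta$ of some type; $I(\mathsf{is\text{-}expr}^\alpha)(A)=\mathrm T$ iff $A=\mathcal E(\mathbf B_\alpha)$ for some eval-free $\mathbf B_\alpha$; $I(\sqsubset)(A)(B)=\mathrm T$ iff $A$ is a proper subexpression of $B$; $I(\mathsf{is\text{-}free\text{-}in})(A)(B)=\mathrm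 T$ iff $A=\ulcorner\mathbf x_\alpha\urcorner$, $B=\mathcal E(\mathbf C_\beta)$ for some eval-free $\mathbf C_\beta$, and $\mathbf x_\alpha$ is free in $\mathbf C_\beta$. An assignment $\phi$ maps each $\mathbf x_\alpha\in\mathcal V$ into $D_\alpha$; $\phi[\mathbf x_\alpha\mapsto d]$ is the usual modification. A general model is an interpretation $\mathcal M$ for which there is a valuation $V^{\mathcal M}_\phi(\mathbf C_\gamma)\in D_\gamma$ (for all $\phi$ and all expressions) with: (V1) $V_\phi(\mathbf x_\alpha)=\phi(\mathbf x_\alpha)$; (V2) $V_\phi(\mathbf c_\alpha)=I(\mathbf c_\alpha)$; (V3) $V_\phi(\mathbf F\,\mathbf A)=V_\phi(\mathbf F)(V_\phi(\mathbf A))$; (V4) $V_\phi(\lambda\mathbf x_\alpha.\mathbf B_\beta)$ is the $f\in D_{\alpha\to\beta}$ with $f(d)=V_{\phi[\mathbf x_\alpha\mapsto d]}(\mathbf B_\beta)$; (V5) $V_\phi(\ulcorner\mathbf A_\alpha\urcorner)=\mathcal E(\mathbf A_\alpha)$; (V6) if $V_\phi(\mathsf{is\text{-}expr}^\beta\,\mathbf A_\epsilon)=\mathrm T$ then $V_\phi([\![\mathbf A_\epsilon]\!]_\beta)=V_\phi(\mathcal E^{-1}(V_\phi(\mathbf A_\epsilon)))$; (V7) for each $\beta$ there is a fixed $d_\beta\in D_\beta$ such that $V_\phi([\![\mathbf A_\epsilon]\!]_\beta)=d_\beta$ whenever $V_\phi(\mathsf{is\text{-}expr}^\beta\,\mathbf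 A_\epsilon)=\mathrm F$. $\mathcal M\models\mathbf A_o$ ($\mathbf A_o$ valid in $\mathcal M$) iff $V_\phi(\mathbf A_o)=\mathrm T$ for all $\phi$; $\models\mathbf A_o$ (valid in CTT$_{\rm qe}$) iff valid in every general model. A standard model is an interpretation in which every $D_{\alpha\to\beta}$ is the set of all total functions $D_\alpha\to D_\beta$. *)

From Stdlib Require Import Relations Arith.

Inductive ty : Type :=
| Iota | Omicron | Eps | Fn (a b : ty).

Definition ty_eq_dec (a b : ty) : {a = b} + {a <> b}.
Proof. decide equality. Defined.

Inductive lcon : Type :=
| CEq (a : ty) | CIsVar | CIsVarT (a : ty) | CIsCon | CIsConT (a : ty)
| CApp | CAbs | CQuo | CIsExpr | CIsExprT (a : ty) | CSub | CIsFreeIn.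

Definition lcon_ty (c : lcon) : ty :=
  match c with
  | CEq a => Fn a (Fn a Omicron)
  | CIsVar | CIsVarT _ | CIsCon | CIsConT _ | CIsExpr | CIsExprT _ => Fn Eps Omicron
  | CApp | CAbs => Fn Eps (Fn Eps Eps)
  | CQuo => Fn Eps Eps
  | CSub | CIsFreeIn => Fn Eps (Fn Eps Omicron)
  end.

Section CTTqe.
(* The set C of constants: the logical constants plus an arbitrary
   family K of further (non-logical) typed constants. *)
Variable K : Type.
Variable kty : K -> ty.

Inductive con : Type := LC (c : lcon) | UC (k : K).

Definition con_ty (c : con) : ty :=
  match c with LC l => lcon_ty l | UC k => kty k end.

(* Intrinsically typed raw expressions; variables are symbols x^n_a.
   Quotation is restricted to eval-free bodies by the predicate [wf] below. *)
Inductive expr : ty -> Type :=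
| Var (n : nat) (a : ty) : expr a
| Con (c : con) : expr (con_ty c)
| Ap {a b : ty} (F : expr (Fn a b)) (A : expr a) : expr b
| Lam (n : nat) (a : ty) {b : ty} (B : expr b) : expr (Fn a b)
| Quote {a : ty} (A : expr a) : expr Eps
| Eval (b : ty) (A : expr Eps) : expr b.

Fixpoint eval_free {a} (e : expr a) : Prop :=
  match e with
  | Var _ _ | Con _ => True
  | Ap F A => eval_free F /\ eval_free A
  | Lam _ _ B => eval_free B
  | Quote A => eval_free A
  | Eval _ _ => False
  end.

Fixpoint wf {a} (e : expr a) : Prop :=
  match e with
  | Var _ _ | Con _ => True
  | Ap F A => wf F /\ wf A
  | Lam _ _ B => wf B
  | Quote A => eval_free A
  | Eval _ A => wf A
  end.

(* Free occurrence of x^n_a (meaningful for eval-free expressions). *)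
Fixpoint free_in (n : nat) (a : ty) {b} (e : expr b) : Prop :=
  match e with
  | Var m c => m = n /\ c = a
  | Con _ => False
  | Ap F A => free_in n a F \/ free_in n a A
  | Lam m c B => ~ (m = n /\ c = a) /\ free_in n a B
  | Quote _ => False
  | Eval _ A => free_in n a A
  end.

Definition cApp (A B : expr Eps) : expr Eps := Ap (Ap (Con (LC CApp)) A) B.
Definition cAbs (A B : expr Eps) : expr Eps := Ap (Ap (Con (LC CAbs)) A) B.
Definition cQuo (A : expr Eps) : expr Eps := Ap (Con (LC CQuo)) A.

Inductive is_construction : expr Eps -> Prop :=
| cons_var n a : is_construction (Quote (Var n a))
| cons_con c : is_construction (Quote (Con c))
| cons_app A B : is_construction A -> is_construction B -> is_construction (cApp A B)
| cons_abs A B : is_construction A -> is_construction B -> is_construction (cAbs A B)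
| cons_quo A : is_construction A -> is_construction (cQuo A).

(* The map E (meaningful on eval-free expressions; the Eval clause is a dummy). *)
Fixpoint E {a} (e : expr a) : expr Eps :=
  match e with
  | Var n a => Quote (Var n a)
  | Con c => Quote (Con c)
  | Ap F A => cApp (E F) (E A)
  | Lam n a B => cAbs (Quote (Var n a)) (E B)
  | Quote A => cQuo (E A)
  | Eval _ A => Quote (Eval Eps A)
  end.

Inductive imm_sub : {a : ty & expr a} -> {b : ty & expr b} -> Prop :=
| isub_apF a b (F : expr (Fn a b)) (A : expr a) : imm_sub (existT _ _ F) (existT _ _ (Ap F A))
| isub_apA a b (F : expr (Fn a b)) (A : expr a) : imm_sub (existT _ _ A) (existT _ _ (Ap F A))
| isub_lamV n a b (B : expr b) : imm_sub (existT _ _ (Var n a)) (existT _ _ (Lam n a B))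
| isub_lamB n a b (B : expr b) : imm_sub (existT _ _ B) (existT _ _ (Lam n a B))
| isub_quo a (A : expr a) : imm_sub (existT _ _ A) (existT _ _ (Quote A))
| isub_eval b (A : expr Eps) : imm_sub (existT _ _ A) (existT _ _ (Eval b A)).

Definition proper_subexpr {a b} (A : expr a) (B : expr b) : Prop :=
  clos_trans _ imm_sub (existT _ _ A) (existT _ _ B).

Definition construction : Type := {e : expr Eps | is_construction e}.

(* D_iota is a nonempty type U; D_o = bool (true = T); D_eps = the
   constructions; D_(a->b) is the set of total functions D_a -> D_b
   singled out by the predicate FP a b (given uniformly in the carriers). *)
Record frame : Type := {
  U : Type;
  U_inhabited : U;
  FP : forall (a b : ty) (X Y : Type), (X -> Y) -> Prop }.

Fixpoint D (F : frame) (a : ty) : Type :=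
  match a with
  | Iota => U F
  | Omicron => bool
  | Eps => construction
  | Fn a b => {f : D F a -> D F b | FP F a b (D F a) (D F b) f}
  end.

Definition dapp {F : frame} {a b : ty} (f : D F (Fn a b)) (x : D F a) : D F b :=
  proj1_sig f x.

Definition cval {F : frame} (x : D F Eps) : expr Eps := proj1_sig (x : construction).

Definition interp (F : frame) : Type := forall c : con, D F (con_ty c).

Definition is_interp (F : frame) (I : interp F) : Prop :=
  (forall a (x y : D F a),
      dapp (dapp (I (LC (CEq a)) : D F (Fn a (Fn a Omicron))) x) y = true <-> x = y) /\
  (forall A : D F Eps,
      dapp (I (LC CIsVar) : D F (Fn Eps Omicron)) A = true <->
      exists n b, cval A = Quote (Var n b)) /\
  (forall a (A : D F Eps),
      dapp (I (LC (CIsVarT a)) : D F (Fn Eps Omicron)) A = true <->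
      exists n, cval A = Quote (Var n a)) /\
  (forall A : D F Eps,
      dapp (I (LC CIsCon) : D F (Fn Eps Omicron)) A = true <->
      exists c, cval A = Quote (Con c)) /\
  (forall a (A : D F Eps),
      dapp (I (LC (CIsConT a)) : D F (Fn Eps Omicron)) A = true <->
      exists c, con_ty c = a /\ cval A = Quote (Con c)) /\
  (forall A B : D F Eps,
      cval (dapp (dapp (I (LC CApp) : D F (Fn Eps (Fn Eps Eps))) A) B) = cApp (cval A) (cval B)) /\
  (forall A B : D F Eps,
      cval (dapp (dapp (I (LC CAbs) : D F (Fn Eps (Fn Eps Eps))) A) B) = cAbs (cval A) (cval B)) /\
  (forall A : D F Eps,
      cval (dapp (I (LC CQuo) : D F (Fn Eps Eps)) A) = cQuo (cval A)) /\
  (forall A : D F Eps,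
      dapp (I (LC CIsExpr) : D F (Fn Eps Omicron)) A = true <->
      exists b (B : expr b), eval_free B /\ E B = cval A) /\
  (forall a (A : D F Eps),
      dapp (I (LC (CIsExprT a)) : D F (Fn Eps Omicron)) A = true <->
      exists B : expr a, eval_free B /\ E B = cval A) /\
  (forall A B : D F Eps,
      dapp (dapp (I (LC CSub) : D F (Fn Eps (Fn Eps Omicron))) A) B = true <->
      proper_subexpr (cval A) (cval B)) /\
  (forall A B : D F Eps,
      dapp (dapp (I (LC CIsFreeIn) : D F (Fn Eps (Fn Eps Omicron))) A) B = true <->
      exists n a, cval A = Quote (Var n a) /\
        exists c (C : expr c), eval_free C /\ E C = cval B /\ free_in n a C).

Definition assignment (F : frame) : Type := forall (n : nat) (a : ty), D F a.

Definition upd {F : frame} (phi : assignment F) (n : nat) (a : ty) (d : D F a)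
  : assignment F :=
  fun m c =>
    match Nat.eq_dec n m, ty_eq_dec a c with
    | left _, left H => eq_rect a (D F) d c H
    | _, _ => phi m c
    end.

Definition valuation_fn (F : frame) : Type :=
  assignment F -> forall a, expr a -> D F a.

(* Conditions (V1)-(V7) on all (well-formed) expressions; d is the family d_beta. *)
Definition is_valuation (F : frame) (I : interp F) (V : valuation_fn F)
    (d : forall b, D F b) : Prop :=
  forall phi : assignment F,
  (forall n a, V phi a (Var n a) = phi n a) /\
  (forall c, V phi _ (Con c) = I c) /\
  (forall a b (G : expr (Fn a b)) (A : expr a), wf G -> wf A ->
      V phi b (Ap G A) = dapp (V phi _ G) (V phi a A)) /\
  (forall n a b (B : expr b), wf B ->
      forall x : D F a, dapp (V phi _ (Lam n a B)) x = V (upd phi n a x) b B) /\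
  (forall a (A : expr a), eval_free A -> cval (V phi Eps (Quote A)) = E A) /\
  (forall b (A : expr Eps), wf A ->
      V phi Omicron (Ap (Con (LC (CIsExprT b))) A) = true ->
      forall B : expr b, eval_free B -> E B = cval (V phi Eps A) ->
      V phi b (Eval b A) = V phi b B) /\
  (forall b (A : expr Eps), wf A ->
      V phi Omicron (Ap (Con (LC (CIsExprT b))) A) = false ->
      V phi b (Eval b A) = d b).

(* A general model is an interpretation (F, I) admitting a valuation.
   A formula is valid if it is true under every assignment in every general
   model (using its valuation, which is unique on well-formed expressions). *)
Definition valid (P : expr Omicron) : Prop :=
  forall (F : frame) (I : interp F) (V : valuation_fn F) (d : forall b, D F b),
    is_interp F I -> is_valuation F I V d ->
    forall phi : assignment F, V phi Omicron P = true.

Definition Eqn {a : ty} (X Y : expr a) : expr Omicron :=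
  Ap (Ap (Con (LC (CEq a))) X) Y.

End CTTqe.

Arguments Var {K kty}.
Arguments Con {K kty}.
Arguments Ap {K kty a b}.
Arguments Lam {K kty} n a {b}.
Arguments Quote {K kty a}.
Arguments Eval {K kty}.
Arguments eval_free {K kty a}.
Arguments wf {K kty a}.
Arguments free_in {K kty} n a {b}.
Arguments valid {K kty}.
Arguments Eqn {K kty a}.

(* Applied to an argument e, both sides denote V B under phi updated at x and
   at y (to e), the only difference being the value given to x: V A under phi on
   the left, under phi[y |-> e] on the right.  Distinct updates commute, so in
   case (1) the two values agree because y is not free in A, and in case (2)
   the x-update is irrelevant because x is not free in B. *)
From Stdlib Require Import Arith FunctionalExtensionality ProofIrrelevance Eqdep_dec.

Arguments D {K kty} F a.
Arguments upd {K kty F}.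
Arguments dapp {K kty F a b}.
Arguments cval {K kty F}.
Arguments E {K kty a}.

Lemma eval_free_wf (K : Type) (kty : K -> ty) b (e : expr K kty b) :
  eval_free e -> wf e.
Proof. induction e; simpl; tauto. Qed.

Section Assignments.
Variables (K : Type) (kty : K -> ty) (F : frame).

Lemma dfun_ext a b (f g : D (K := K) (kty := kty) F (Fn a b)) :
  (forall x, dapp f x = dapp g x) -> f = g.
Proof.
  destruct f as [f Hf], g as [g Hg]; unfold dapp; simpl; intro Hfg.
  assert (f = g) by (apply functional_extensionality; auto); subst.
  f_equal; apply proof_irrelevance.
Qed.

Lemma construction_ext (x y : D (K := K) (kty := kty) F Eps) :
  cval x = cval y -> x = y.
Proof.
  destruct x as [x Hx], y as [y Hy]; unfold cval; simpl; intro Hxy; subst.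
  f_equal; apply proof_irrelevance.
Qed.

Lemma upd_eq (phi : assignment K kty F) n a x : upd phi n a x n a = x.
Proof.
  unfold upd; destruct (Nat.eq_dec n n); [|congruence].
  destruct (ty_eq_dec a a); [|congruence].
  now rewrite (UIP_dec ty_eq_dec e0 eq_refl).
Qed.

Lemma upd_neq (phi : assignment K kty F) n a x m c :
  ~ (n = m /\ a = c) -> upd phi n a x m c = phi m c.
Proof.
  intro Hnm; unfold upd.
  destruct (Nat.eq_dec n m), (ty_eq_dec a c); tauto.
Qed.

Lemma upd_comm (phi : assignment K kty F) n1 a1 x1 n2 a2 x2 :
  (n1, a1) <> (n2, a2) ->
  upd (upd phi n1 a1 x1) n2 a2 x2 = upd (upd phi n2 a2 x2) n1 a1 x1.
Proof.
  intro Hne.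
  apply functional_extensionality_dep; intro m.
  apply functional_extensionality_dep; intro c.
  destruct (Nat.eq_dec n1 m), (ty_eq_dec a1 c),
           (Nat.eq_dec n2 m), (ty_eq_dec a2 c); subst;
  try (exfalso; congruence);
  repeat first [ rewrite upd_eq | rewrite upd_neq by tauto ]; reflexivity.
Qed.

End Assignments.

Section Valuation.
Variables (K : Type) (kty : K -> ty) (F : frame) (I : interp K kty F).
Variables (V : valuation_fn K kty F) (d : forall b, D (K := K) (kty := kty) F b).
Hypothesis HV : is_valuation K kty F I V d.

Lemma V_var phi n a : V phi a (Var n a) = phi n a.
Proof. apply (HV phi). Qed.

Lemma V_con phi c : V phi _ (Con c) = I c.
Proof. apply (HV phi). Qed.

Lemma V_app phi a b (G : expr K kty (Fn a b)) (A : expr K kty a) :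
  wf G -> wf A -> V phi b (Ap G A) = dapp (V phi _ G) (V phi a A).
Proof. apply (HV phi). Qed.

Lemma V_lam phi n a b (B : expr K kty b) (x : D F a) :
  wf B -> dapp (V phi _ (Lam n a B)) x = V (upd phi n a x) b B.
Proof. intro HB; now apply (HV phi). Qed.

Lemma V_quote phi a (A : expr K kty a) :
  eval_free A -> cval (V phi Eps (Quote A)) = E A.
Proof. apply (HV phi). Qed.

Lemma V_agree_on_free b (e : expr K kty b) : eval_free e ->
  forall phi psi, (forall n a, free_in n a e -> phi n a = psi n a) ->
  V phi b e = V psi b e.
Proof.
  induction e as [n a|c|a b' G IHG A IHA|n a b' B IHB|a A _|]; simpl;
    intros Hef phi psi Hfree.
  - rewrite !V_var; auto.
  - now rewrite !V_con.
  - destruct Hef as [HG HA].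
    rewrite !V_app by (apply eval_free_wf; auto).
    rewrite (IHG HG phi psi), (IHA HA phi psi); auto.
  - apply dfun_ext; intro x.
    rewrite !V_lam by (apply eval_free_wf; auto).
    apply IHB; auto; intros m c Hm.
    destruct (Nat.eq_dec n m), (ty_eq_dec a c); subst;
      [ now rewrite !upd_eq
      | rewrite !upd_neq by tauto; apply Hfree; tauto .. ].
  - apply construction_ext; now rewrite !V_quote.
  - contradiction.
Qed.

Lemma V_upd_not_free phi n a (x : D F a) b (e : expr K kty b) :
  eval_free e -> ~ free_in n a e -> V (upd phi n a x) b e = V phi b e.
Proof.
  intros Hef Hnf; apply V_agree_on_free; auto; intros m c Hm.
  apply upd_neq; intros [-> ->]; contradiction.
Qed.

End Valuation.

Lemma valid_Eqn (K : Type) (kty : K -> ty) a (X Y : expr K kty a) :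
  wf X -> wf Y ->
  (forall F I V d, is_interp K kty F I -> is_valuation K kty F I V d ->
     forall phi, V phi a X = V phi a Y) ->
  valid (Eqn X Y).
Proof.
  intros HX HY Heq F I V d HI HV phi; unfold Eqn.
  rewrite !(V_app _ _ _ _ _ _ HV) by (simpl; auto).
  pose proof (V_con _ _ _ _ _ _ HV phi (LC K (CEq a))) as Heq_con; simpl in Heq_con.
  rewrite Heq_con.
  now apply (proj1 HI), (Heq F I V d).
Qed.

Theorem mainTheorem13 (K : Type) (kty : K -> ty)
    (nx : nat) (a : ty) (ny : nat) (b : ty) (c : ty)
    (A : expr K kty a) (B : expr K kty c) :
  (nx, a) <> (ny, b) ->
  wf A -> wf B ->
  ((eval_free A /\ ~ free_in ny b A) \/ (eval_free B /\ ~ free_in nx a B)) ->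
  valid (Eqn (Ap (Lam nx a (Lam ny b B)) A) (Lam ny b (Ap (Lam nx a B) A))).
Proof.
  intros Hne HA HB Hcase.
  apply valid_Eqn; [simpl; tauto .. |]; intros F I V d _ HV phi.
  apply dfun_ext; intro e.
  rewrite (V_app _ _ _ _ _ _ HV) by (simpl; tauto).
  rewrite !(V_lam _ _ _ _ _ _ HV) by (simpl; tauto).
  rewrite (V_app _ _ _ _ _ _ HV) by (simpl; tauto).
  rewrite (V_lam _ _ _ _ _ _ HV) by assumption.
  destruct Hcase as [[HefA HnfA] | [HefB HnfB]].
  - rewrite (V_upd_not_free _ _ _ _ _ _ HV phi ny b e a A) by assumption.
    now rewrite upd_comm.
  - rewrite upd_comm by assumption.
    now rewrite !(V_upd_not_free _ _ _ _ _ _ HV _ nx a _ c B) by assumption.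
Qed.
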